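(* (Discrete inf–sup condition.) There is a constant $\beta>0$, independent of the mesh sizes $h$ and $l$, such that for every admissible discrete displacement $\boldsymbol v=(v^x,v^y)$ $$\sup_{\underline\tau\neq 0}\frac{(D_x\tau^{11}+d_y\tau^{12},v^x)_{TM}+(d_x\tau^{12}+D_y\tau^{22},v^y)_{MT}}{\|\underline\tau\|}\ \ge\ \beta\,\|\boldsymbol v\|,$$ where the supremum is over all nonzero discrete stresses $\underline\tau=(\tau^{11},\tau^{22},\tau^{12})$.
   Context: Let $\Omega=(0,a)\times(0,b)$ with grids $0=x_0<x_1<\dots<x_{n_x}=a$ and $0=y_0<\dots<y_{n_y}=b$. Set $x_{i+1/2}=(x_i+x_{i+1})/2$, $h_{i+1/2}=x_{i+1}-x_i$, $h_i=(h_{i-1/2}+h_{i+1/2})/2$ for $1\le i\le n_x-1$, $h_0=h_{1/2}/2$, $h_{n_x}=h_{n_x-1/2}/2$, $h=\max_i h_{i+1/2}$; analogously $y_{j+1/2}$, $l_{j+1/2}=y_{j+1}-y_j$, $l_j=(l_{j-1/2}+l_{j+1/2})/2$ ($1\le j\le n_y-1$), $l_0=l_{1/2}/2$, $l_{n_y}=l_{n_y-1/2}/2$, $l=\max_j l_{j+1/2}$. For a discrete function $\phi$ write $\phi_{\alpha,\beta}=\phi(x_\alpha,y_\beta)$ ($\alpha,\beta$ integers or half-integers). Difference quotients: $[d_x\phi]_{i+1/2,m}=(\phi_{i+1,m}-\phi_{i,m})/h_{i+1/2}$, $[d_y\phi]_{k,j+1/2}=(\phi_{k,j+1}-\phi_{k,j})/l_{j+1/2}$,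 $[D_x\phi]_{i,m}=(\phi_{i+1/2,m}-\phi_{i-1/2,m})/h_i$ for $1\le i\le n_x-1$, $[D_y\phi]_{k,j}=(\phi_{k,j+1/2}-\phi_{k,j-1/2})/l_j$ for $1\le j\le n_y-1$, and at the boundary $[D_x\phi]_{0,m}=(\phi_{1/2,m}-\phi_{0,m})/h_0$, $[D_x\phi]_{n_x,m}=(\phi_{n_x,m}-\phi_{n_x-1/2,m})/h_{n_x}$, $[D_y\phi]_{k,0}=(\phi_{k,1/2}-\phi_{k,0})/l_0$, $[D_y\phi]_{k,n_y}=(\phi_{k,n_y}-\phi_{k,n_y-1/2})/l_{n_y}$. Discrete inner products: $(\phi,\theta)_M=\sum_{i=0}^{n_x-1}\sum_{j=0}^{n_y-1}h_{i+1/2}l_{j+1/2}\phi_{i+1/2,j+1/2}\theta_{i+1/2,j+1/2}$; $(\phi,\theta)_T=\sum_{i=0}^{n_x}\sum_{j=0}^{n_y}h_il_j\phi_{i,j}\theta_{i,j}$; $(\phi,\theta)_{TM}=\sum_{i=1}^{n_x-1}\sum_{j=0}^{n_y-1}h_il_{j+1/2}\phi_{i,j+1/2}\theta_{i,j+1/2}$; $(\phi,\theta)_{MT}=\sum_{i=0}^{n_x-1}\sum_{j=1}^{n_y-1}h_{i+1/2}l_j\phi_{i+1/2,j}\theta_{i+1/2,j}$; $\|\phi\|_\xi^2=(\phi,\phi)_\xi$. A discrete stress $\underline\tau=(\tau^{11},\tau^{22},\tau^{12})$ consists of $\tau^{11},\tau^{22}$ defined at cell centers $(x_{i+1/2},y_{j+1/2})$,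 $0\le i\le n_x-1$, $0\le j\le n_y-1$, and $\tau^{12}$ defined at nodes $(x_i,y_j)$, $0\le i\le n_x$, $0\le j\le n_y$; $\|\underline\tau\|^2=\|\tau^{11}\|_M^2+\|\tau^{22}\|_M^2+\|\tau^{12}\|_T^2$. An admissible discrete displacement $\boldsymbol v=(v^x,v^y)$ consists of $v^x$ defined at the points $(x_i,y_{j+1/2})$ ($0\le i\le n_x,0\le j\le n_y-1$) and $(x_i,y_0),(x_i,y_{n_y})$ ($0\le i\le n_x$), and $v^y$ defined at $(x_{i+1/2},y_j)$ ($0\le i\le n_x-1,0\le j\le n_y$) and $(x_0,y_j),(x_{n_x},y_j)$ ($0\le j\le n_y$), such that $v^x$ and $v^y$ vanish at all of their points lying on $\partial\Omega$; $\|\boldsymbol v\|^2=\|v^x\|_{TM}^2+\|v^y\|_{MT}^2$. *)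

From HB Require Import structures.
From mathcomp Require Import all_boot all_order all_algebra.
From mathcomp Require Import reals.
Set Implicit Arguments. Unset Strict Implicit. Unset Printing Implicit Defensive.
Import Order.TTheory GRing.Theory Num.Theory.
Local Open Scope ring_scope.

(* A grid index alpha is an integer i (Int i) or a half-integer i+1/2 (Half i). *)
Inductive idx := Int of nat | Half of nat.

Section Grid.
Variable R : realType.

(* A discrete function: phi alpha beta = phi(x_alpha, y_beta).
   Only its values at the points where it is "defined" matter. *)
Definition dfun := idx -> idx -> R.

Definition is_grid (n : nat) (a : R) (x : nat -> R) : Prop :=
  x 0%N = 0 /\ x n = a /\ (forall i : nat, (i < n)%N -> x i < x i.+1).

Definition hhalf (x : nat -> R) (i : nat) : R := x i.+1 - x i.
Definition hnode (n : nat) (x : nat -> R) (i : nat) : R :=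
  if i == 0%N then hhalf x 0 / 2
  else if i == n then hhalf x n.-1 / 2
  else (hhalf x i.-1 + hhalf x i) / 2.

(* [d_x phi]_{i+1/2,m} ; junk (0) at integer first index *)
Definition dX (x : nat -> R) (phi : dfun) : dfun := fun al be =>
  match al with
  | Half i => (phi (Int i.+1) be - phi (Int i) be) / hhalf x i
  | Int _ => 0
  end.
Definition dY (y : nat -> R) (phi : dfun) : dfun := fun al be =>
  match be with
  | Half j => (phi al (Int j.+1) - phi al (Int j)) / hhalf y j
  | Int _ => 0
  end.
Definition DX (nx : nat) (x : nat -> R) (phi : dfun) : dfun := fun al be =>
  match al with
  | Int i =>
      if i == 0%N then (phi (Half 0) be - phi (Int 0) be) / hnode nx x 0
      else if i == nx then (phi (Int nx) be - phi (Half nx.-1) be) / hnode nx x nx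
      else (phi (Half i) be - phi (Half i.-1) be) / hnode nx x i
  | Half _ => 0
  end.
Definition DY (ny : nat) (y : nat -> R) (phi : dfun) : dfun := fun al be =>
  match be with
  | Int j =>
      if j == 0%N then (phi al (Half 0) - phi al (Int 0)) / hnode ny y 0
      else if j == ny then (phi al (Int ny) - phi al (Half ny.-1)) / hnode ny y ny
      else (phi al (Half j) - phi al (Half j.-1)) / hnode ny y j
  | Half _ => 0
  end.

Variables (nx ny : nat) (x y : nat -> R).

Definition ipM (phi th : dfun) : R :=
  \sum_(0 <= i < nx) \sum_(0 <= j < ny)
     hhalf x i * hhalf y j * phi (Half i) (Half j) * th (Half i) (Half j).
Definition ipT (phi th : dfun) : R :=
  \sum_(0 <= i < nx.+1) \sum_(0 <= j < ny.+1)
     hnode nx x i * hnode ny y j * phi (Int i) (Int j) * th (Int i) (Int j).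
Definition ipTM (phi th : dfun) : R :=
  \sum_(1 <= i < nx) \sum_(0 <= j < ny)
     hnode nx x i * hhalf y j * phi (Int i) (Half j) * th (Int i) (Half j).
Definition ipMT (phi th : dfun) : R :=
  \sum_(0 <= i < nx) \sum_(1 <= j < ny)
     hhalf x i * hnode ny y j * phi (Half i) (Int j) * th (Half i) (Int j).

(* Discrete stress: tau11, tau22 at cell centres, tau12 at nodes. *)
Record stress := Stress { t11 : dfun; t22 : dfun; t12 : dfun }.

Definition stress_nonzero (tau : stress) : Prop :=
  (exists i j, (i < nx)%N /\ (j < ny)%N /\
      (t11 tau (Half i) (Half j) <> 0 \/ t22 tau (Half i) (Half j) <> 0))
  \/ (exists i j, (i <= nx)%N /\ (j <= ny)%N /\ t12 tau (Int i) (Int j) <> 0).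

Definition stress_norm (tau : stress) : R :=
  Num.sqrt (ipM (t11 tau) (t11 tau) + ipM (t22 tau) (t22 tau)
            + ipT (t12 tau) (t12 tau)).

Record disp := Disp { vx : dfun; vy : dfun }.

(* v^x is defined at (x_i, y_{j+1/2}) and at (x_i,y_0),(x_i,y_{ny});
   v^y at (x_{i+1/2}, y_j) and at (x_0,y_j),(x_{nx},y_j).
   Admissible: both vanish at all their points lying on the boundary. *)
Definition admissible (v : disp) : Prop :=
  (forall j, (j < ny)%N -> vx v (Int 0) (Half j) = 0 /\ vx v (Int nx) (Half j) = 0)
  /\ (forall i, (i <= nx)%N -> vx v (Int i) (Int 0) = 0 /\ vx v (Int i) (Int ny) = 0)
  /\ (forall i, (i < nx)%N -> vy v (Half i) (Int 0) = 0 /\ vy v (Half i) (Int ny) = 0)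
  /\ (forall j, (j <= ny)%N -> vy v (Int 0) (Int j) = 0 /\ vy v (Int nx) (Int j) = 0).

Definition disp_norm (v : disp) : R :=
  Num.sqrt (ipTM (vx v) (vx v) + ipMT (vy v) (vy v)).

Definition bform (tau : stress) (v : disp) : R :=
  ipTM (fun al be => DX nx x (t11 tau) al be + dY y (t12 tau) al be) (vx v)
  + ipMT (fun al be => dX x (t12 tau) al be + DY ny y (t22 tau) al be) (vy v).

End Grid.

From HB Require Import structures.
From mathcomp Require Import all_boot all_order all_algebra.
From mathcomp Require Import reals.
From mathcomp Require Import ring lra.
From Stdlib Require Import Classical.
Import Order.TTheory GRing.Theory Num.Theory.
Local Open Scope ring_scope.
Set Implicit Arguments. Unset Strict Implicit.

(* Test with tau = (-d_x v^x, -d_y v^y, 0).  Summation by parts along each grid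
   line, where v^x (resp. v^y) vanishes at both ends, gives
   b(tau, v) = ||d_x v^x||_M^2 + ||d_y v^y||_M^2 = ||tau||^2, so the quotient is
   ||tau||.  A discrete Poincare inequality along grid lines (Cauchy-Schwarz on
   v_i = sum_(k < i) h_(k+1/2) [d v]_(k+1/2)) bounds ||v^x||_TM by a ||d_x v^x||_M
   and ||v^y||_MT by b ||d_y v^y||_M, whence beta = 1 / (a + b).  If tau = 0,
   i.e. both gradients vanish, the bound is trivial because the constant shear
   stress tau^12 = 1 has quotient 0, so every upper bound M is nonnegative. *)

Section WeightedSums.
Variable R : realType.

Lemma lagrange_identity (I : Type) (r : seq I) (h e : I -> R) :
  \sum_(i <- r) \sum_(j <- r) h i * h j * (e i - e j) ^+ 2 =
  2 * ((\sum_(i <- r) h i) * (\sum_(i <- r) h i * e i ^+ 2)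
       - (\sum_(i <- r) h i * e i) ^+ 2).
Proof.
have expand i j : h i * h j * (e i - e j) ^+ 2 = h j * (h i * e i ^+ 2)
    + h i * (h j * e j ^+ 2) - 2 * ((h i * e i) * (h j * e j)) by ring.
under eq_bigr => i _ do under eq_bigr => j _ do rewrite expand.
under eq_bigr do rewrite !big_split /= sumrN -mulr_suml -!mulr_sumr.
rewrite !big_split /= sumrN -!mulr_sumr -!mulr_suml expr2; ring.
Qed.

Lemma sqr_wsum_le (I : eqType) (r : seq I) (h e : I -> R) :
  {in r, forall i, 0 <= h i} ->
  (\sum_(i <- r) h i * e i) ^+ 2 <= (\sum_(i <- r) h i) * \sum_(i <- r) h i * e i ^+ 2.
Proof.
move=> h_ge0; rewrite -subr_ge0 -(pmulr_rge0 _ (ltr0Sn R 1)) -lagrange_identity.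
rewrite big_seq; apply: sumr_ge0 => i ri; rewrite big_seq; apply: sumr_ge0 => j rj.
by rewrite mulr_ge0 ?sqr_ge0 // mulr_ge0 ?h_ge0.
Qed.

Lemma sumr_by_parts (n : nat) (g V : nat -> R) : V 0%N = 0 -> V n = 0 ->
  \sum_(1 <= i < n) (g i.-1 - g i) * V i = \sum_(0 <= k < n) g k * (V k.+1 - V k).
Proof.
move=> V0 Vn; case: n Vn => [|n Vn]; first by rewrite !big_geq.
suff -> : forall m, \sum_(1 <= i < m.+1) (g i.-1 - g i) * V i =
   \sum_(0 <= k < m.+1) g k * (V k.+1 - V k) + g 0%N * V 0%N - g m * V m.+1.
  by rewrite Vn V0; ring.
elim=> [|m IH]; first by rewrite big_geq // big_nat1; ring.
by rewrite big_nat_recr // [in RHS]big_nat_recr //= IH; ring.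
Qed.
End WeightedSums.

Definition dquot (R : realType) (x V : nat -> R) (k : nat) : R :=
  (V k.+1 - V k) / hhalf x k.

Section Grid1D.
Variables (R : realType) (n : nat) (a : R) (x : nat -> R).
Hypothesis gx : is_grid n a x.

Lemma hhalf_gt0 k : (k < n)%N -> 0 < hhalf x k.
Proof. by case: gx => _ [_ x_incr] kn; rewrite subr_gt0 x_incr. Qed.

Lemma hnode_gt0 i : (0 < i < n)%N -> 0 < hnode n x i.
Proof.
case/andP=> i_gt0 i_lt; rewrite /hnode (negbTE (lt0n_neq0 i_gt0)) (ltn_eqF i_lt).
by rewrite divr_gt0 // addr_gt0 // hhalf_gt0 // (leq_ltn_trans (leq_pred i)).
Qed.

Lemma grid_le i j : (i <= j <= n)%N -> x i <= x j.
Proof.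
case/andP=> ij jn; rewrite -subr_ge0 -telescope_sumr // big_nat_cond.
apply: sumr_ge0 => k /andP[/andP[_ kj] _].
exact/ltW/hhalf_gt0/(leq_trans kj).
Qed.

Lemma grid_length_ge0 : 0 <= a.
Proof. by case: gx => x0 [xn _]; rewrite -x0 -xn; apply: grid_le; rewrite leqnn. Qed.

Lemma sum_hnode_interior_le : \sum_(1 <= i < n) hnode n x i <= a.
Proof.
have [x0 [xn _]] := gx; have [n0|n_gt0] := posnP n.
  by rewrite big_geq ?n0 // -xn n0 x0.
rewrite (telescope_sumr_eq (fun k => (x k + x k.-1) / 2)) //=; last first.
  move=> i /andP[i_gt0 i_lt]; rewrite /hnode /hhalf (negbTE (lt0n_neq0 i_gt0)).
  by rewrite (ltn_eqF i_lt) prednK //; field.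
have xn1_le : x n.-1 <= a by rewrite -xn; apply: grid_le; rewrite leq_pred leqnn.
have x1_ge : 0 <= x 1%N by rewrite -x0; apply: grid_le; rewrite n_gt0.
by rewrite xn x0; lra.
Qed.

Lemma discrete_poincare (V : nat -> R) : V 0%N = 0 ->
  \sum_(1 <= i < n) hnode n x i * V i ^+ 2 <=
  a ^+ 2 * \sum_(0 <= k < n) hhalf x k * dquot x V k ^+ 2.
Proof.
move=> V0; set e := dquot x V; set Q := \sum_(0 <= k < n) _.
have [x0 [xn _]] := gx.
have Q_ge0 i : (i <= n)%N -> 0 <= \sum_(0 <= k < i) hhalf x k * e k ^+ 2.
  move=> i_le; rewrite big_nat_cond; apply: sumr_ge0 => k /andP[/andP[_ ki] _].
  by rewrite mulr_ge0 ?sqr_ge0 // ltW // hhalf_gt0 // (leq_trans ki).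
have V_sum i : (i <= n)%N -> V i = \sum_(0 <= k < i) hhalf x k * e k.
  move=> i_le; rewrite (telescope_sumr_eq V) ?V0 ?subr0 // => k /andP[_ ki].
  by rewrite /e mulrC divfK // lt0r_neq0 // hhalf_gt0 // (leq_trans ki).
have V_sqr i : (i <= n)%N -> V i ^+ 2 <= a * Q.
  move=> i_le; rewrite V_sum //.
  apply: le_trans (sqr_wsum_le e _) _.
    by move=> k; rewrite mem_index_iota => /andP[_ ki]; exact/ltW/hhalf_gt0/(leq_trans ki).
  apply: ler_pM; rewrite ?Q_ge0 //.
  - by rewrite big_nat_cond; apply: sumr_ge0 => k /andP[/andP[_ ki] _]; exact/ltW/hhalf_gt0/(leq_trans ki).
  - by rewrite /hhalf telescope_sumr // x0 subr0 -xn; apply: grid_le; rewrite i_le leqnn.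
  - rewrite /Q (big_cat_nat (leq0n i) i_le) /= lerDl big_nat_cond.
    by apply: sumr_ge0 => k /andP[/andP[_ kn] _]; rewrite mulr_ge0 ?sqr_ge0 // ltW // hhalf_gt0.
apply: le_trans (_ : \sum_(1 <= i < n) hnode n x i * (a * Q) <= _).
  apply: ler_sum_nat => i /andP[i_gt0 i_lt].
  by rewrite ler_wpM2l ?V_sqr ?(ltnW i_lt) // ltW // hnode_gt0 // i_gt0.
rewrite -mulr_suml expr2 -mulrA ler_wpM2r ?sum_hnode_interior_le //.
by rewrite mulr_ge0 ?grid_length_ge0 ?Q_ge0.
Qed.

End Grid1D.

Section Grid2D.
Variables (R : realType) (nx ny : nat) (a b : R) (x y : nat -> R).
Hypotheses (gx : is_grid nx a x) (gy : is_grid ny b y).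

Lemma ipM_ge0 (f : dfun R) : 0 <= ipM nx ny x y f f.
Proof.
rewrite /ipM big_nat_cond; apply: sumr_ge0 => i /andP[/andP[_ i_lt] _].
rewrite big_nat_cond; apply: sumr_ge0 => j /andP[/andP[_ j_lt] _].
by rewrite -mulrA -expr2 mulr_ge0 ?sqr_ge0 // ltW // mulr_gt0 ?(hhalf_gt0 gx) ?(hhalf_gt0 gy).
Qed.

Lemma ipTM_le (V : dfun R) : (forall j, (j < ny)%N -> V (Int 0) (Half j) = 0) ->
  ipTM nx ny x y V V <= a ^+ 2 * ipM nx ny x y (dX x V) (dX x V).
Proof.
move=> V0; rewrite /ipTM /ipM exchange_big_nat [in X in _ <= X]exchange_big_nat mulr_sumr.
apply: ler_sum_nat => j /andP[_ j_lt].
have lhsE i : hnode nx x i * hhalf y j * V (Int i) (Half j) * V (Int i) (Half j)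
    = hhalf y j * (hnode nx x i * V (Int i) (Half j) ^+ 2) by ring.
have rhsE i : hhalf x i * hhalf y j * dX x V (Half i) (Half j) * dX x V (Half i) (Half j)
    = hhalf y j * (hhalf x i * dquot x (fun k => V (Int k) (Half j)) i ^+ 2).
  by rewrite /dquot /=; ring.
rewrite (eq_bigr _ (fun i _ => lhsE i)) [X in _ <= _ * X](eq_bigr _ (fun i _ => rhsE i)).
rewrite -!mulr_sumr mulrCA ler_wpM2l ?(ltW (hhalf_gt0 gy j_lt)) //.
exact: (@discrete_poincare _ _ _ _ gx (fun i => V (Int i) (Half j)) (V0 j j_lt)).
Qed.

Lemma ipMT_le (W : dfun R) : (forall i, (i < nx)%N -> W (Half i) (Int 0) = 0) ->
  ipMT nx ny x y W W <= b ^+ 2 * ipM nx ny x y (dY y W) (dY y W).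
Proof.
move=> W0; rewrite /ipMT /ipM mulr_sumr; apply: ler_sum_nat => i /andP[_ i_lt].
have lhsE j : hhalf x i * hnode ny y j * W (Half i) (Int j) * W (Half i) (Int j)
    = hhalf x i * (hnode ny y j * W (Half i) (Int j) ^+ 2) by ring.
have rhsE j : hhalf x i * hhalf y j * dY y W (Half i) (Half j) * dY y W (Half i) (Half j)
    = hhalf x i * (hhalf y j * dquot y (fun k => W (Half i) (Int k)) j ^+ 2).
  by rewrite /dquot /=; ring.
rewrite (eq_bigr _ (fun j _ => lhsE j)) [X in _ <= _ * X](eq_bigr _ (fun j _ => rhsE j)).
rewrite -!mulr_sumr mulrCA ler_wpM2l ?(ltW (hhalf_gt0 gx i_lt)) //.
exact: (@discrete_poincare _ _ _ _ gy (fun j => W (Half i) (Int j)) (W0 i i_lt)).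
Qed.

Lemma ipTM_DX_dX (V : dfun R) :
  (forall j, (j < ny)%N -> V (Int 0) (Half j) = 0 /\ V (Int nx) (Half j) = 0) ->
  ipTM nx ny x y (DX nx x (dX x V)) V = - ipM nx ny x y (dX x V) (dX x V).
Proof.
move=> V0; rewrite /ipTM /ipM exchange_big_nat [in RHS]exchange_big_nat -sumrN.
apply: eq_big_nat => j /andP[_ j_lt]; have [V0l V0r] := V0 j j_lt.
pose g k := dX x V (Half k) (Half j); pose W k := V (Int k) (Half j).
have lhsE i : (1 <= i < nx)%N -> hnode nx x i * hhalf y j * DX nx x (dX x V) (Int i) (Half j)
    * V (Int i) (Half j) = - hhalf y j * ((g i.-1 - g i) * W i).
  move=> /[dup] i_int /andP[i_gt0 i_lt]; have := hnode_gt0 gx i_int.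
  rewrite /DX (negbTE (lt0n_neq0 i_gt0)) (ltn_eqF i_lt) /g /W => hn_gt0.
  by field; rewrite lt0r_neq0.
have rhsE k : (0 <= k < nx)%N -> hhalf x k * hhalf y j * dX x V (Half k) (Half j)
    * dX x V (Half k) (Half j) = hhalf y j * (g k * (W k.+1 - W k)).
  move=> /andP[_ k_lt]; have := hhalf_gt0 gx k_lt; rewrite /g /W /= => h_gt0.
  by field; rewrite lt0r_neq0.
rewrite (eq_big_nat _ _ lhsE) (eq_big_nat _ _ rhsE) -!mulr_sumr sumr_by_parts //.
by rewrite mulNr.
Qed.

Lemma ipMT_DY_dY (W : dfun R) :
  (forall i, (i < nx)%N -> W (Half i) (Int 0) = 0 /\ W (Half i) (Int ny) = 0) ->
  ipMT nx ny x y (DY ny y (dY y W)) W = - ipM nx ny x y (dY y W) (dY y W).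
Proof.
move=> W0; rewrite /ipMT /ipM -sumrN.
apply: eq_big_nat => i /andP[_ i_lt]; have [W0l W0r] := W0 i i_lt.
pose g k := dY y W (Half i) (Half k); pose U k := W (Half i) (Int k).
have lhsE j : (1 <= j < ny)%N -> hhalf x i * hnode ny y j * DY ny y (dY y W) (Half i) (Int j)
    * W (Half i) (Int j) = - hhalf x i * ((g j.-1 - g j) * U j).
  move=> /[dup] j_int /andP[j_gt0 j_lt]; have := hnode_gt0 gy j_int.
  rewrite /DY (negbTE (lt0n_neq0 j_gt0)) (ltn_eqF j_lt) /g /U => hn_gt0.
  by field; rewrite lt0r_neq0.
have rhsE k : (0 <= k < ny)%N -> hhalf x i * hhalf y k * dY y W (Half i) (Half k)
    * dY y W (Half i) (Half k) = hhalf x i * (g k * (U k.+1 - U k)).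
  move=> /andP[_ k_lt]; have := hhalf_gt0 gy k_lt; rewrite /g /U /= => h_gt0.
  by field; rewrite lt0r_neq0.
rewrite (eq_big_nat _ _ lhsE) (eq_big_nat _ _ rhsE) -!mulr_sumr sumr_by_parts //.
by rewrite mulNr.
Qed.

Lemma DX_opp (phi : dfun R) al be :
  DX nx x (fun al be => - phi al be) al be = - DX nx x phi al be.
Proof.
by case: al => [i|i] /=; [do 2?case: ifP => _; rewrite -mulNr opprD | rewrite oppr0].
Qed.

Lemma DY_opp (phi : dfun R) al be :
  DY ny y (fun al be => - phi al be) al be = - DY ny y phi al be.
Proof.
by case: be => [j|j] /=; [do 2?case: ifP => _; rewrite -mulNr opprD | rewrite oppr0].
Qed.

Lemma DX_cst (c : R) al be : DX nx x (fun _ _ => c) al be = 0.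
Proof. by case: al => [i|i] //=; do 2?case: ifP => _; rewrite subrr mul0r. Qed.

Lemma DY_cst (c : R) al be : DY ny y (fun _ _ => c) al be = 0.
Proof. by case: be => [j|j] //=; do 2?case: ifP => _; rewrite subrr mul0r. Qed.

Lemma dX_cst (c : R) al be : dX x (fun _ _ => c) al be = 0.
Proof. by case: al => [i|i] //=; rewrite subrr mul0r. Qed.

Lemma dY_cst (c : R) al be : dY y (fun _ _ => c) al be = 0.
Proof. by case: be => [j|j] //=; rewrite subrr mul0r. Qed.

Definition grad_stress (v : disp R) : stress R :=
  Stress (fun al be => - dX x (vx v) al be) (fun al be => - dY y (vy v) al be)
         (fun _ _ => 0).

Definition grad_sqnorm (v : disp R) : R :=
  ipM nx ny x y (dX x (vx v)) (dX x (vx v)) + ipM nx ny x y (dY y (vy v)) (dY y (vy v)).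

Lemma stress_norm_grad_stress v :
  stress_norm nx ny x y (grad_stress v) = Num.sqrt (grad_sqnorm v).
Proof.
rewrite /stress_norm /grad_sqnorm /=; congr Num.sqrt.
rewrite [ipT _ _ _ _ _ _]big1 ?addr0 => [|i _]; last by rewrite big1 // => j _; rewrite mulr0.
by congr (_ + _); apply: eq_bigr => i _; apply: eq_bigr => j _; ring.
Qed.

Lemma bform_grad_stress v :
  admissible nx ny v -> bform nx ny x y (grad_stress v) v = grad_sqnorm v.
Proof.
case=> vx0 [_ [vy0 _]]; rewrite /bform /grad_sqnorm.
rewrite -[ipM _ _ _ _ (dX _ _) _]opprK -[ipM _ _ _ _ (dY _ _) _]opprK.
rewrite -ipTM_DX_dX // -ipMT_DY_dY //.
congr (_ + _); rewrite -sumrN; apply: eq_bigr => i _; rewrite -sumrN; apply: eq_bigr => j _.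
- by rewrite DX_opp dY_cst; ring.
- by rewrite dX_cst DY_opp; ring.
Qed.

Lemma disp_norm_le v :
  admissible nx ny v -> disp_norm nx ny x y v <= (a + b) * Num.sqrt (grad_sqnorm v).
Proof.
case=> vx0 [_ [vy0 _]].
have a_ge0 := grid_length_ge0 gx; have b_ge0 := grid_length_ge0 gy.
have A_ge0 := ipM_ge0 (dX x (vx v)); have B_ge0 := ipM_ge0 (dY y (vy v)).
rewrite /disp_norm -(ger0_norm (addr_ge0 a_ge0 b_ge0)) -sqrtr_sqr -sqrtrM ?sqr_ge0 //.
rewrite ler_sqrt ?mulr_ge0 ?sqr_ge0 ?addr_ge0 //.
apply: le_trans (lerD (ipTM_le (fun j j_lt => (vx0 j j_lt).1))
                      (ipMT_le (fun i i_lt => (vy0 i i_lt).1))) _.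
by rewrite mulrDr lerD // ler_wpM2r //; nra.
Qed.

Lemma grad_stress_quotient v : admissible nx ny v ->
  bform nx ny x y (grad_stress v) v / stress_norm nx ny x y (grad_stress v)
  = Num.sqrt (grad_sqnorm v).
Proof.
move=> v_adm; rewrite bform_grad_stress // stress_norm_grad_stress.
have G_ge0 : 0 <= grad_sqnorm v by rewrite addr_ge0 ?ipM_ge0.
have [->|G_neq0] := eqVneq (grad_sqnorm v) 0; first by rewrite sqrtr0 mul0r.
by rewrite -{1}(sqr_sqrtr G_ge0) expr2 mulfK // sqrtr_eq0 -ltNge lt_def G_neq0.
Qed.

End Grid2D.

Section Stresses.
Variables (R : realType) (nx ny : nat) (x y : nat -> R).

Lemma stress_nonzero_norm_gt0 (tau : stress R) :
  0 < stress_norm nx ny x y tau -> stress_nonzero nx ny tau.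
Proof.
move=> norm_gt0; apply: NNPP => tau0; move: norm_gt0.
have t11_0 i j : (i < nx)%N -> (j < ny)%N -> t11 tau (Half i) (Half j) = 0.
  by move=> i_lt j_lt; apply: NNPP => nz; apply: tau0; left; exists i, j; do 2!split=> //; left.
have t22_0 i j : (i < nx)%N -> (j < ny)%N -> t22 tau (Half i) (Half j) = 0.
  by move=> i_lt j_lt; apply: NNPP => nz; apply: tau0; left; exists i, j; do 2!split=> //; right.
have t12_0 i j : (i <= nx)%N -> (j <= ny)%N -> t12 tau (Int i) (Int j) = 0.
  by move=> i_le j_le; apply: NNPP => nz; apply: tau0; right; exists i, j.
have ipM0 (f : dfun R) : (forall i j, (i < nx)%N -> (j < ny)%N -> f (Half i) (Half j) = 0) ->
    ipM nx ny x y f f = 0.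
  move=> f0; rewrite /ipM big_nat_cond big1 // => i /andP[/andP[_ i_lt] _].
  by rewrite big_nat_cond big1 // => j /andP[/andP[_ j_lt] _]; rewrite f0 ?mulr0.
have ipT0 : ipT nx ny x y (t12 tau) (t12 tau) = 0.
  rewrite /ipT big_nat_cond big1 // => i /andP[/andP[_ i_le] _].
  by rewrite big_nat_cond big1 // => j /andP[/andP[_ j_le] _]; rewrite t12_0 ?mulr0.
by rewrite /stress_norm (ipM0 _ t11_0) (ipM0 _ t22_0) ipT0 !addr0 sqrtr0 ltxx.
Qed.

Lemma bform_cst_stress (c11 c22 c12 : R) (v : disp R) :
  bform nx ny x y (Stress (fun _ _ => c11) (fun _ _ => c22) (fun _ _ => c12)) v = 0.
Proof.
rewrite /bform /ipTM /ipMT !big1 ?addr0 // => i _; rewrite big1 // => j _.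
- by rewrite dX_cst DY_cst addr0 mulr0 mul0r.
- by rewrite DX_cst dY_cst addr0 mulr0 mul0r.
Qed.

Lemma quotient_ub_ge0 (v : disp R) (M : R) :
  (forall tau, stress_nonzero nx ny tau -> bform nx ny x y tau v / stress_norm nx ny x y tau <= M) ->
  0 <= M.
Proof.
have shear_nz : stress_nonzero nx ny (Stress (fun _ _ => 0) (fun _ _ => 0) (fun _ _ => 1 : R)).
  by right; exists 0%N, 0%N; split=> //; split=> //=; apply/eqP; exact: oner_neq0.
by move=> /(_ _ shear_nz); rewrite bform_cst_stress mul0r.
Qed.

End Stresses.

Unset Implicit Arguments. Set Strict Implicit.

Theorem lemma3p1 (R : realType) (a b : R) :
  0 < a -> 0 < b ->
  exists beta : R, 0 < beta /\
    forall (nx ny : nat) (x y : nat -> R),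
      (0 < nx)%N -> (0 < ny)%N ->
      is_grid nx a x -> is_grid ny b y ->
      forall v : disp R, admissible nx ny v ->
      forall M : R,
        (forall tau : stress R, stress_nonzero nx ny tau ->
           bform nx ny x y tau v / stress_norm nx ny x y tau <= M) ->
        beta * disp_norm nx ny x y v <= M.
Proof.
move=> a_gt0 b_gt0; have ab_gt0 : 0 < a + b by rewrite addr_gt0.
exists (a + b)^-1; split=> [|nx ny x y _ _ gx gy v v_adm M M_ub]; first by rewrite invr_gt0.
rewrite mulrC ler_pdivrMr //; apply: le_trans (disp_norm_le gx gy v_adm) _.
rewrite mulrC ler_wpM2r ?(ltW ab_gt0) //.
have [G0|G_neq0] := eqVneq (grad_sqnorm nx ny x y v) 0.
  by rewrite G0 sqrtr0 (quotient_ub_ge0 M_ub).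
rewrite -(grad_stress_quotient gx gy v_adm).
apply: M_ub; apply: (stress_nonzero_norm_gt0 (x := x) (y := y)).
rewrite stress_norm_grad_stress sqrtr_gt0 lt_def G_neq0.
by rewrite addr_ge0 ?(ipM_ge0 gx gy).
Qed.
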